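(* Let $T$ be a tree on $n \geq 3$ vertices. Then $T$ is saturated if and only if $T = K_{1,n-1}$.
   Context: All graphs are finite and simple. A degree monotone path in a graph $G$ is a path $v_1v_2\ldots v_m$ such that $\deg(v_1)\le \cdots\le \deg(v_m)$ or $\deg(v_1)\ge \cdots\ge \deg(v_m)$; its length is its number of vertices. $mp(G)$ denotes the maximum length of a degree monotone path in $G$. A graph $G$ is saturated if $mp(G+e)>mp(G)$ for every pair $e$ of non-adjacent vertices of $G$, where $G+e$ is $G$ with the edge $e$ added. *)

From mathcomp Require Import all_boot.
Set Implicit Arguments. Unset Strict Implicit. Unset Printing Implicit Defensive.

Definition simple_graph (V : finType) (e : rel V) : Prop :=
  symmetric e /\ irreflexive e.

Section Graphs.
Variable V : finType.
Implicit Types (e : rel V).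

Definition deg e (x : V) : nat := #|[set y | e x y]|.

Definition is_path e (p : seq V) : bool :=
  if p is x :: q then path e x q && uniq p else false.

Definition dm_path e (p : seq V) : bool :=
  is_path e p &&
  (sorted leq (map (deg e) p) || sorted geq (map (deg e) p)).

Definition mp e : nat :=
  \max_(k < #|V|.+1 | [exists p : k.-tuple V, dm_path e p]) k.

Definition add_edge e (u v : V) : rel V :=
  fun x y => [|| e x y, (x == u) && (y == v) | (x == v) && (y == u)].

Definition saturated e : Prop :=
  forall u v : V, u != v -> ~~ e u v -> mp e < mp (add_edge e u v).

Definition connected e : Prop := forall x y : V, connect e x y.

Definition acyclic e : Prop :=
  ~ exists c : seq V, [/\ 3 <= size c, uniq c & cycle e c].

Definition is_tree e : Prop := simple_graph e /\ connected e /\ acyclic e.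

(* G is (isomorphic to) the star K_{1,n-1}, n = #|V|: some centre vertex
   adjacent to all others, and no other edges. *)
Definition is_star e : Prop :=
  exists c : V, forall x y : V, e x y = (x != y) && ((x == c) || (y == c)).

End Graphs.

(* A star is saturated: its degree monotone paths have at most two vertices,
   while joining two leaves u, v creates the monotone path u v c through the
   centre c.
   Conversely, let x have maximum degree in a saturated tree. If x is not
   adjacent to all vertices, walking away from x through a non-neighbour ends
   in a leaf l not adjacent to x, and adding the edge xl does not lengthen any
   degree monotone path. Indeed x, now of strictly maximum degree, can only
   start a non-increasing path of T + xl; the leaf l, whose degree becomes 2,
   can only start it (possibly after x) or end it. A path avoiding l, or ending
   in l, is already monotone in T. A path l ... t whose other vertices have
   degree at most 2 leaves through its end t; the neighbour z of t outside it
   has degree at least 2, since otherwise l ... t z would be a component of T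
   missing x, so l ... t z is a longer nondecreasing path of T. Hence x is
   adjacent to every vertex, and acyclicity makes T the star centred at x. *)

From mathcomp Require Import all_boot.
Set Implicit Arguments. Unset Strict Implicit. Unset Printing Implicit Defensive.

Section GraphBasics.
Variables (V : finType) (e : rel V).

Lemma card_le_deg (A : {set V}) v : (forall y, y \in A -> e v y) -> #|A| <= deg e v.
Proof. by move=> hA; apply/subset_leq_card/subsetP => y /hA; rewrite inE. Qed.

Lemma deg_gt0 v a : e v a -> 0 < deg e v.
Proof. by move=> eva; rewrite -(cards1 a); apply: card_le_deg => y /set1P->. Qed.

Lemma deg_gt1 v a b : e v a -> e v b -> a != b -> 1 < deg e v.
Proof.
move=> eva evb ab; have <- : #|[set a; b]| = 2 by rewrite cards2 ab.
by apply: card_le_deg => y /set2P[]->.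
Qed.

Lemma deg_gt2 v a b c : e v a -> e v b -> e v c -> a != b -> a != c -> b != c ->
  2 < deg e v.
Proof.
move=> eva evb evc ab ac bc.
have -> : 3 = #|a |: [set b; c]| by rewrite cardsU1 cards2 !inE negb_or ab ac bc.
by apply: card_le_deg => y /setU1P[->|/set2P[]->].
Qed.

Lemma size_le_mp p : dm_path e p -> size p <= mp e.
Proof.
move=> dp; have up : uniq p by case: p dp => // a r /andP[/andP[_ ->]].
have sp : size p < #|V|.+1 by rewrite ltnS -(card_uniqP up) max_card.
apply: (@leq_bigmax_cond _ _ (fun k : 'I_#|V|.+1 => k : nat) (Ordinal sp)).
by apply/existsP; exists (in_tuple p).
Qed.

Lemma mp_le_ub m : (forall p, dm_path e p -> size p <= m) -> mp e <= m.
Proof. by move=> ub; apply/bigmax_leqP => k /existsP[t /ub]; rewrite size_tuple. Qed.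

Lemma add_edge_sym u v : symmetric e -> symmetric (add_edge e u v).
Proof.
move=> se y z; rewrite /add_edge se.
by case: (e z y); rewrite //= orbC andbC [(z == v) && _]andbC.
Qed.

Lemma deg_add_edge_l u v : u != v -> ~~ e u v -> deg (add_edge e u v) u = (deg e u).+1.
Proof.
move=> uv nuv; rewrite /deg; have -> : [set y | add_edge e u v u y] = v |: [set y | e u y].
  by apply/setP => y; rewrite !inE /add_edge eqxx (negbTE uv) orbF orbC eq_sym.
by rewrite cardsU1 inE nuv.
Qed.

Lemma deg_add_edge_r u v : symmetric e -> u != v -> ~~ e u v ->
  deg (add_edge e u v) v = (deg e v).+1.
Proof.
move=> se uv nuv; rewrite /deg; have -> : [set y | add_edge e u v v y] = u |: [set y | e v y].
  by apply/setP => y; rewrite !inE /add_edge eqxx eq_sym (negbTE uv) /= orbC eq_sym.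
by rewrite cardsU1 inE se nuv.
Qed.

Lemma deg_add_edge_other u v y : y != u -> y != v -> deg (add_edge e u v) y = deg e y.
Proof.
move=> yu yv; rewrite /deg; congr #|pred_of_set _|; apply/setP => z.
by rewrite !inE /add_edge (negbTE yu) (negbTE yv) orbF.
Qed.

Lemma add_edge_path u v a s : u \notin a :: s -> path (add_edge e u v) a s = path e a s.
Proof.
move=> us; apply: (eq_in_path (P := predC1 u)).
  by move=> y z; rewrite !inE => yu zu; rewrite /add_edge (negbTE yu) (negbTE zu) andbF !orbF.
by apply/allP => y ys; apply: contraNneq us => <-.
Qed.

Lemma connect_boundary (S : seq V) y z : connect e y z -> y \in S -> z \notin S ->
  exists u w, [/\ u \in S, w \notin S & e u w].
Proof.
case/connectP => p + -> {z}; elim: p y => [|b p IH] y /=; first by move=> _ ->.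
case/andP=> eyb pp yS; case bS: (b \in S); first exact: IH.
by exists y, b; rewrite bS.
Qed.

End GraphBasics.

Section SymmetricGraphs.
Variables (V : finType) (e : rel V).
Hypothesis se : symmetric e.

Lemma dm_path_rev p : dm_path e p -> dm_path e (rev p).
Proof.
case: p => // a r /andP[/andP[pr ur] so]; apply/andP; split.
  have -> : rev (a :: r) = last a r :: rev (belast a r) by rewrite lastI rev_rcons.
  apply/andP; split; last by rewrite -rev_rcons -lastI rev_uniq.
  by rewrite rev_path (eq_path (e' := e)) // => y z; rewrite /= se.
by rewrite map_rev !rev_sorted orbC.
Qed.

Lemma mp_le_nonincr m :
  (forall p, is_path e p -> sorted geq (map (deg e) p) -> size p <= m) -> mp e <= m.
Proof.
move=> ub; apply: mp_le_ub => p dp; case/andP: (dp) => ip /orP[so|]; last exact: ub.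
case/andP: (dm_path_rev dp) => irp _; rewrite -size_rev; apply: ub irp _.
by rewrite map_rev rev_sorted.
Qed.

Lemma path_nbrs a s y : path e a s -> uniq (a :: s) -> y \in s -> y != last a s ->
  exists p n, [/\ p \in a :: s, n \in a :: s, p != n, e y p & e y n].
Proof.
move=> + + ys; case/splitPr: ys => s1 s2.
rewrite cat_path last_cat /= => /andP[_ /andP[epy pn]].
case: s2 pn => [|n s2] /=; first by rewrite eqxx.
move=> /andP[eyn _] us _; exists (last a s1), n; split.
- by rewrite -cat_cons mem_cat mem_last.
- by rewrite -cat_cons mem_cat !inE eqxx !orbT.
- have {us} : uniq ((a :: s1) ++ [:: y, n & s2]) := us.
  rewrite cat_uniq => /and3P[_ /hasPn dis _].
  have /dis : n \in [:: y, n & s2] by rewrite !inE eqxx orbT.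
  by apply: contraNneq => <-; rewrite mem_last.
- by rewrite se.
- exact: eyn.
Qed.

Lemma exit_at_last l q u z : path e l q -> uniq (l :: q) -> deg e l <= 1 ->
  {in q, forall y, deg e y <= 2} -> u \in l :: q -> z \notin l :: q -> e u z ->
  u = last l q.
Proof.
move=> plq ulq dl dq uS zS euz; apply/eqP; apply: contraT => ul.
have notz w : w \in l :: q -> w != z by move=> wS; apply: contraNneq zS => <-.
case: (eqVneq u l) => [eul|u_l].
  subst u; case: q plq ulq dq ul notz {uS zS} => [|b q] /=; first by rewrite eqxx.
  move=> /andP[elb _] _ _ _ notz.
  have bz : b != z by rewrite notz // !inE eqxx orbT.
  by have := deg_gt1 elb euz bz; rewrite ltnNge dl.
have uq : u \in q by move: uS; rewrite inE (negbTE u_l).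
have [p [n [pS nS pn eup eun]]] := path_nbrs plq ulq uq ul.
by have := deg_gt2 eup eun euz pn (notz p pS) (notz n nS); rewrite ltnNge dq.
Qed.

End SymmetricGraphs.

Lemma sorted_leq_nseq_rcons k a b d : a <= b <= d -> sorted leq (a :: rcons (nseq k b) d).
Proof.
case/andP => ab bd; elim: k a ab => [|k IH] a ab /=; first by rewrite andbT (leq_trans ab bd).
by rewrite ab; apply: IH.
Qed.

Lemma nonincr_head_max (T : eqType) (f : T -> nat) a r y :
  sorted geq (map f (a :: r)) -> y \in r -> f y <= f a.
Proof.
move=> /= /(order_path_min (fun _ _ _ h1 h2 => leq_trans h2 h1)) /allP h yr.
exact: h (map_f f yr).
Qed.

Section ConnectedGraphs.
Variables (V : finType) (e : rel V).
Hypotheses (se : symmetric e) (con : connected e).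

Lemma leaf_path_lt_mp l q x : path e l q -> uniq (l :: q) -> deg e l = 1 ->
  {in q, forall y, deg e y <= 2} -> x \notin l :: q -> 1 < deg e x -> size (l :: q) < mp e.
Proof.
move=> plq ulq dl dq xS dx.
have [u [z [uS zS euz]]] := connect_boundary (con l x) (mem_head l q) xS.
have ulast := exit_at_last se plq ulq (eq_leq dl) dq uS zS euz.
set s := rcons q z.
have ps : path e l s by rewrite rcons_path plq -ulast.
have us : uniq (l :: s) by rewrite -rcons_cons rcons_uniq zS ulq.
(* Otherwise [l :: s] would be a whole connected component, and it misses [x]. *)
have dz : 1 < deg e z.
  rewrite ltnNge; apply/negP => dz.
  have xz : x != z by apply: contraTneq dz => <-; rewrite -ltnNge.
  have xs : x \notin l :: s by rewrite -rcons_cons mem_rcons inE negb_or xz.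
  have ds : {in s, forall y, deg e y <= 2}.
    by move=> y; rewrite mem_rcons inE => /predU1P[->|/dq//]; apply: leq_trans dz _.
  have [u' [z' [u'S z'S euz']]] := connect_boundary (con l x) (mem_head l s) xs.
  have u'z : u' = z by rewrite (exit_at_last se ps us (eq_leq dl) ds u'S z'S euz') last_rcons.
  have uz' : u != z'.
    by apply: contraNneq z'S => <-; rewrite -rcons_cons mem_rcons inE uS orbT.
  have ezu : e z u by rewrite se.
  have ezz' : e z z' by rewrite -u'z.
  by have := deg_gt1 ezu ezz' uz'; rewrite ltnNge dz.
have dq2 : {in q, forall y, deg e y = 2}.
  move=> y yq; apply/eqP; rewrite eqn_leq dq //=.
  have ys : y \in s by rewrite mem_rcons inE yq orbT.
  have yz : y != last l s.
    by rewrite last_rcons; apply: contraNneq zS => <-; rewrite inE yq orbT.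
  by have [p [n [_ _ pn eyp eyn]]] := path_nbrs se ps us ys yz; apply: deg_gt1 eyp eyn pn.
have degs : map (deg e) (l :: s) = 1 :: rcons (nseq (size q) 2) (deg e z).
  rewrite /= map_rcons dl; congr (_ :: rcons _ _).
  rewrite -(size_map (deg e)); apply/all_pred1P/allP => _ /mapP[y yq ->].
  by rewrite /= dq2.
apply: leq_trans (size_le_mp (p := l :: s) _); first by rewrite /= size_rcons.
by rewrite /dm_path /is_path ps us degs sorted_leq_nseq_rcons.
Qed.

End ConnectedGraphs.

Section AddEdgeMaxLeaf.
Variables (V : finType) (e : rel V) (x l : V).
Hypotheses (se : symmetric e) (con : connected e).
Hypotheses (dmax : forall y, deg e y <= deg e x) (dx : 1 < deg e x) (dl : deg e l = 1).
Hypotheses (xl : x != l) (nxl : ~~ e x l).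
Local Notation e' := (add_edge e x l).

Lemma deg_add_edge_leaf : deg e' l = 2.
Proof. by rewrite deg_add_edge_r // dl. Qed.

Lemma deg_add_edge_le_max y : y != x -> deg e' y <= deg e x.
Proof.
move=> yx; case: (eqVneq y l) => [->|yl]; first by rewrite deg_add_edge_leaf.
by rewrite deg_add_edge_other.
Qed.

Lemma deg_add_edge_mono y z : y != l -> z != l -> deg e' z <= deg e' y -> deg e z <= deg e y.
Proof.
move=> yl zl; case: (eqVneq y x) => [-> _|yx]; first exact: dmax.
case: (eqVneq z x) => [->|zx]; last by rewrite !deg_add_edge_other.
rewrite deg_add_edge_l // => h.
by have := leq_trans h (deg_add_edge_le_max yx); rewrite ltnn.
Qed.

Lemma sorted_deg_add_edge s :
  l \notin s -> sorted geq (map (deg e') s) -> sorted geq (map (deg e) s).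
Proof.
move=> ls; rewrite !sorted_map; apply: (sub_in_sorted (P := predC1 l)).
  by move=> y z; rewrite !inE => yl zl; apply: deg_add_edge_mono.
by apply/allP => y ys; apply: contraNneq ls => <-.
Qed.

Lemma x_notin_tail a r : uniq (a :: r) -> sorted geq (map (deg e') (a :: r)) -> x \notin r.
Proof.
move=> uar so; apply/negP => xr; have := nonincr_head_max so xr.
have ax : a != x by apply: contraTneq uar => ->; rewrite /= xr.
by rewrite deg_add_edge_l // ltnNge deg_add_edge_le_max.
Qed.

Lemma leaf_head_lt_mp r : path e l r -> uniq (l :: r) -> x \notin r ->
  sorted geq (map (deg e') (l :: r)) -> size (l :: r) < mp e.
Proof.
move=> plr ulr xr so; apply: (leaf_path_lt_mp se con plr ulr dl _ _ dx); last first.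
  by rewrite inE negb_or xl.
move=> y yr; have yx : y != x by apply: contraNneq xr => <-.
have yl : y != l by apply: contraTneq ulr => <-; rewrite /= yr.
by rewrite -(deg_add_edge_other e yx yl) -deg_add_edge_leaf (nonincr_head_max so).
Qed.

Lemma nonincr_path_le_mp a r : path e a r -> uniq (a :: r) -> x \notin r ->
  sorted geq (map (deg e') (a :: r)) -> size (a :: r) <= mp e.
Proof.
move=> par uar xr so; case: (boolP (l \in a :: r)) => [lp|lp]; last first.
  by apply: size_le_mp; rewrite /dm_path /is_path par uar sorted_deg_add_edge ?orbT.
case: (eqVneq a l) => [al|al]; first by subst a; apply/ltnW/leaf_head_lt_mp.
have lr : l \in r by move: lp; rewrite inE eq_sym (negbTE al).
have llast : l = last a r.
  apply/eqP; apply: contraT => nl.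
  have [p [n [_ _ pn elp eln]]] := path_nbrs se par uar lr nl.
  by have := deg_gt1 elp eln pn; rewrite dl.
case/lastP: r lr llast par uar so {lp xr} => [|r b]; first by rewrite in_nil.
move=> _; rewrite last_rcons => <-{b}.
rewrite -rcons_cons rcons_path rcons_uniq => /andP[par eb] /andP[bar uar].
rewrite map_rcons /= rcons_path => /andP[so _].
apply: (size_le_mp (p := a :: rcons r l)).
rewrite /dm_path /is_path -rcons_cons rcons_path rcons_uniq par eb bar uar.
apply/orP; right; rewrite map_rcons /= rcons_path last_map dl /= (deg_gt0 eb) andbT.
exact: sorted_deg_add_edge bar so.
Qed.

Lemma mp_add_edge_le : mp e' <= mp e.
Proof.
apply: (mp_le_nonincr (add_edge_sym x l se)) => -[//|a r] /andP[par uar] so.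
have xr := x_notin_tail uar so.
case: (eqVneq a x) => [eax|ax]; last first.
  apply: nonincr_path_le_mp => //.
  by rewrite -(@add_edge_path _ e x l) // inE negb_or eq_sym ax.
subst a; case: r par uar xr so => [|b r] par uar xr so; first exact: nonincr_path_le_mp.
have /andP[exb] : e' x b && path e' b r := par; rewrite add_edge_path // => pbr.
case: (boolP (e x b)) => [exb'|nexb]; first by apply: nonincr_path_le_mp; rewrite //= exb'.
have bl : b = l.
  by apply/eqP; move: exb; rewrite /add_edge eqxx (negbTE nexb) (negbTE xl) /= orbF.
subst b; apply: leaf_head_lt_mp => //; first by case/andP: uar.
  by apply: contra xr; rewrite inE orbC => ->.
by case/andP: so.
Qed.

End AddEdgeMaxLeaf.

Section Trees.
Variables (V : finType) (e : rel V).
Hypotheses (se : symmetric e) (ie : irreflexive e) (ac : acyclic e).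

Lemma acyclic_last_nbr x p z : path e x p -> uniq (x :: p) -> z \in x :: p ->
  e (last x p) z -> z = last x (belast x p).
Proof.
move=> pp up zp; case/splitPl: zp pp up => p1 p2 zl.
rewrite cat_path last_cat zl => /andP[_ pz] up ez.
have {up} : uniq ((x :: p1) ++ p2) := up; rewrite cat_uniq => /and3P[_ dis up2].
have zp2 : z \notin p2 by apply/negP => /(hasPn dis); rewrite -zl mem_last.
case: p2 pz ez zp2 up2 {dis} => [|w [|w' p2]] pz ez zp2 up2; first by rewrite ie in ez.
  by rewrite cats1 belast_rcons.
exfalso; apply: ac; exists [:: z, w, w' & p2]; split; first by [].
  by rewrite /= zp2.
by rewrite /cycle rcons_path pz ez.
Qed.

Lemma extend_to_leaf x p : path e x p -> uniq (x :: p) -> 1 < size p ->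
  exists q, [/\ path e x q, uniq (x :: q), 1 < size q & deg e (last x q) <= 1].
Proof.
move=> pp up sp; have [n] := ubnP (#|V| - size p).
elim: n p pp up sp => // n IH p pp up sp hn.
case: (leqP (deg e (last x p)) 1) => [dt|/card_gt1P[z1 [z2 []]]]; first by exists p.
rewrite !inE => ez1 ez2 z12.
have [z zp ez] : exists2 z, z \notin x :: p & e (last x p) z.
  case: (boolP (z1 \in x :: p)) => [z1p|]; last by exists z1.
  case: (boolP (z2 \in x :: p)) => [z2p|]; last by exists z2.
  by move: z12; rewrite (acyclic_last_nbr pp up z1p ez1) (acyclic_last_nbr pp up z2p ez2) eqxx.
have upz : uniq (x :: rcons p z) by rewrite -rcons_cons rcons_uniq zp up.
apply: (IH (rcons p z)) => //; first by rewrite rcons_path pp ez.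
  by rewrite size_rcons ltnW.
have : size (x :: rcons p z) <= #|V| by rewrite -(card_uniqP upz) max_card.
rewrite /= size_rcons subnS -ltnS => /ltnW ltpV.
by rewrite prednK // subn_gt0.
Qed.

Lemma far_leaf x p : path e x p -> uniq (x :: p) -> 1 < size p ->
  exists l, [/\ l != x, ~~ e x l & deg e l = 1].
Proof.
move=> pp up sp; have [q [pq uq sq]] := extend_to_leaf pp up sp.
case/lastP: q pq uq sq => [//|q l]; rewrite last_rcons rcons_path => /andP[pq eql] uq sq dl.
exists l; split.
- by apply: contraTneq uq => ->; rewrite /= mem_rcons mem_head.
- apply/negP => exl; apply: ac; exists (x :: rcons q l); split => //.
  by rewrite /cycle !rcons_path pq eql last_rcons se.
- by apply/eqP; rewrite eqn_leq dl (deg_gt0 (a := last x q)) // se.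
Qed.

Lemma universal_star x : (forall y, y != x -> e x y) -> is_star e.
Proof.
move=> univ; exists x => u w; case: (eqVneq u x) => [->|ux].
  by case: (eqVneq x w) => [<-|xw]; rewrite ?ie // univ // eq_sym.
case: (eqVneq w x) => [->|wx]; first by rewrite orbT andbT se univ.
rewrite andbF; apply/negP => euw; apply: ac; exists [:: x; u; w]; split => //.
  rewrite /= !inE negb_or eq_sym ux eq_sym wx /= andbT.
  by apply: contraTneq euw => ->; rewrite ie.
by rewrite /cycle /= univ // euw se univ.
Qed.

Lemma saturated_universal x : connected e -> saturated e ->
  (forall y, deg e y <= deg e x) -> forall y, y != x -> e x y.
Proof.
move=> con sat dmax y yx; apply: contraT => nxy.
have /connectP[p0 pp0 ye] := con x y.
case: (shortenP pp0) ye => p pp up _ ye.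
have [b [c [p' def_p]]] : exists b c p', p = [:: b, c & p'].
  case: p pp up ye => [|b [|c p']] /=; last by exists b, c, p'.
    by move=> _ _ yx'; rewrite yx' eqxx in yx.
  by move=> /andP[exb _] _ yb; rewrite yb exb in nxy.
have dx : 1 < deg e x.
  apply: leq_trans (dmax b); move: pp up; rewrite def_p /= => /and3P[exb ebc _].
  rewrite !inE !negb_or => /andP[/and3P[_ xc _] _].
  by apply: deg_gt1 ebc xc; rewrite se.
have [l [lx nxl dl]] : exists l, [/\ l != x, ~~ e x l & deg e l = 1].
  by apply: far_leaf pp up _; rewrite def_p.
have xl : x != l by rewrite eq_sym.
by have := sat x l xl nxl; rewrite ltnNge (mp_add_edge_le se con dmax dx dl xl nxl).
Qed.

End Trees.

Section Stars.
Variables (V : finType) (e : rel V) (c : V).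
Hypothesis star_e : forall x y, e x y = (x != y) && ((x == c) || (y == c)).

Lemma star_sym : symmetric e.
Proof. by move=> x y; rewrite !star_e eq_sym orbC. Qed.

Lemma star_nbr x : x != c -> e x c.
Proof. by move=> xc; rewrite star_e xc eqxx orbT. Qed.

Lemma star_leaf_nbr x y : x != c -> e x y -> y = c.
Proof. by move=> xc; rewrite star_e (negbTE xc) => /andP[_ /eqP]. Qed.

Lemma star_deg_leaf x : x != c -> deg e x = 1.
Proof.
move=> xc; apply/eqP; rewrite eqn_leq (deg_gt0 (star_nbr xc)) andbT -(cards1 c).
by apply/subset_leq_card/subsetP => y; rewrite !inE => /(star_leaf_nbr xc)->.
Qed.

Lemma star_mp_le2 : mp e <= 2.
Proof.
apply: mp_le_ub => -[|a [|b [|d p]]] // /andP[/andP[/and3P[eab ebd _]]].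
rewrite /= !inE !negb_or => /andP[/and3P[_ ad _] _].
have bc : b = c.
  apply/eqP; apply: contraNT ad => bc.
  by rewrite (star_leaf_nbr bc ebd) (star_leaf_nbr bc (_ : e b a)) // star_sym.
subst b; have ac : a != c by move: eab; rewrite star_e => /andP[].
have dc : d != c by move: ebd; rewrite star_e eq_sym => /andP[].
have dc2 : 1 < deg e c by apply: deg_gt1 ad; rewrite star_sym star_nbr.
by rewrite /= (star_deg_leaf ac) (star_deg_leaf dc) [deg e c <= 1]leqNgt dc2 /= !andbF.
Qed.

Lemma star_saturated : saturated e.
Proof.
move=> u v uv nuv.
have uc : u != c by apply: contraNneq nuv => uc; rewrite star_sym uc star_nbr // -uc eq_sym.
have vc : v != c by apply: contraNneq nuv => ->; rewrite star_nbr.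
have cu : c != u by rewrite eq_sym.
have cv : c != v by rewrite eq_sym.
have dp : dm_path (add_edge e u v) [:: u; v; c].
  have e'uv : add_edge e u v u v by rewrite /add_edge !eqxx orbT.
  have e'vc : add_edge e u v v c by rewrite /add_edge star_nbr.
  rewrite /dm_path /is_path /= !inE negb_or uv uc vc e'uv e'vc /=.
  rewrite deg_add_edge_l // (deg_add_edge_r star_sym) // !star_deg_leaf //.
  rewrite deg_add_edge_other //.
  by rewrite (deg_gt1 (a := u) (b := v)) // star_sym star_nbr.
by apply: leq_trans (size_le_mp dp); rewrite ltnS star_mp_le2.
Qed.

End Stars.

Unset Implicit Arguments.

Theorem corollary2p3 (V : finType) (e : rel V) :
  3 <= #|V| -> is_tree e -> (saturated e <-> is_star e).
Proof.
move=> hV [[se ie] [con ac]]; split; last by case=> c; apply: star_saturated.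
move=> sat; have /card_gt0P[v0 _] : 0 < #|V| by apply: leq_trans hV.
have [x _ xmax] := @arg_maxnP V v0 predT (deg e) isT.
apply: (universal_star se ie ac (x := x)).
exact: (saturated_universal se ie ac con sat (fun y => xmax y isT)).
Qed.
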